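(* Let $\mathcal{Y}$ be a Hilbert space (identified with its dual) and let $\mathcal{X}=\mathcal{Z}^*$ be the dual space of a Banach space $\mathcal{Z}$, such that weak-star convergence in $\mathcal{X}$ is metrizable on bounded sets. Let $B:\mathcal{Y}\to\mathcal{Z}$ be a bounded linear operator and $A=B^*:\mathcal{X}\to\mathcal{Y}$. Let $J:\mathcal{X}\to\mathbb{R}\cup\{\infty\}$ be convex and absolutely one-homogeneous, and the convex conjugate of a proper functional on $\mathcal{Z}$, and assume that $u\mapsto \frac12\|Au\|_{\mathcal{Y}}^2+J(u)$ is coercive on $\mathcal{X}$. Let $f\in\mathcal{Y}$. Let $p\in\partial J(0)\cap\mathcal{Z}\subset\mathcal{X}^*$ be such that there exist $w\in\mathcal{Y}$ and $0<\tau<1$ with $$J^*\Big(\frac{p-Bw}{\tau}\Big)=0.$$ Then there exists a minimizer of $$\min_{u\in\mathcal{X}}\ \frac12\|Au-f\|_{\mathcal{Y}}^2\quad\text{subject to}\quad J(u)-\langle p,u\rangle=0.$$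
   Context: $J$ absolutely one-homogeneous means $J(\lambda u)=|\lambda|J(u)$ for all $\lambda\in\mathbb{R}$, $u\in\mathcal{X}$. $J^*$ denotes the convex conjugate of $J$, $J^*(r)=\sup_{u\in\mathcal{X}}\langle r,u\rangle-J(u)$ for $r\in\mathcal{X}^*$. $\partial J(0)$ is the convex subdifferential of $J$ at $0$; $\mathcal{Z}$ is regarded as a subspace of $\mathcal{X}^*=\mathcal{Z}^{**}$. *)

From mathcomp Require Import all_boot all_order all_algebra.
From mathcomp Require Import all_classical all_reals all_analysis.
Import Order.TTheory GRing.Theory Num.Theory numFieldNormedType.Exports.
Set Implicit Arguments. Unset Strict Implicit. Unset Printing Implicit Defensive.
Local Open Scope classical_set_scope.
Local Open Scope ring_scope.

(* X = Z^star is represented inside Z -> R: elements of X are the u : Z -> R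
   that are linear and continuous. *)
Definition is_dual {R : realType} {Z : normedModType R} (u : Z -> R) : Prop :=
  (forall (a : R) (x y : Z), u (a *: x + y) = a * u x + u y) /\ continuous u.

Definition dual_norm {R : realType} {Z : normedModType R} (u : Z -> R) : R :=
  sup [set `|u z| | z in [set z : Z | `|z| <= 1]].

Definition wstar_basic {R : realType} {Z : normedModType R}
  (x : Z -> R) (s : seq Z) (e : R) : set (Z -> R) :=
  [set v | is_dual v /\ forall z, z \in s -> `|v z - x z| < e].

Definition wstar_metrizable_on_bounded (R : realType) (Z : normedModType R) : Prop :=
  forall S : set (Z -> R), S `<=` is_dual ->
  (exists r : R, forall u, S u -> dual_norm u <= r) ->
  exists d : (Z -> R) -> (Z -> R) -> R,
    (forall x y, S x -> S y -> 0 <= d x y /\ (d x y = 0 <-> x = y) /\ d x y = d y x) /\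
    (forall x y w, S x -> S y -> S w -> d x w <= d x y + d y w) /\
    (forall x, S x -> forall U : set (Z -> R),
       (exists (s : seq Z) (e : R), 0 < e /\ wstar_basic x s e `&` S `<=` U) <->
       (exists e : R, 0 < e /\ [set y | S y /\ d x y < e] `<=` U)).

(* the norm of Y comes from the inner product ip (Y complete => Hilbert) *)
Definition is_inner_product {R : realType} {Y : normedModType R} (ip : Y -> Y -> R) : Prop :=
  (forall (a : R) (x y z : Y), ip (a *: x + y) z = a * ip x z + ip y z) /\
  (forall x y : Y, ip x y = ip y x) /\
  (forall y : Y, `|y| ^+ 2 = ip y y).

Local Open Scope ereal_scope.

Definition convex_on_dual {R : realType} {Z : normedModType R}
  (J : (Z -> R) -> \bar R) : Prop :=
  forall u v, is_dual u -> is_dual v -> forall t : R, (0 <= t <= 1)%R ->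
    J (fun z => t * u z + (1 - t) * v z)%R <= t%:E * J u + (1 - t)%:E * J v.

Definition abs_one_homogeneous {R : realType} {Z : normedModType R}
  (J : (Z -> R) -> \bar R) : Prop :=
  forall (l : R) u, is_dual u -> J (fun z => l * u z)%R = `|l|%:E * J u.

Definition proper_fun {R : realType} {Z : normedModType R} (G : Z -> \bar R) : Prop :=
  (forall z, G z != -oo) /\ (exists z, G z != +oo).

Definition is_conjugate_of {R : realType} {Z : normedModType R}
  (J : (Z -> R) -> \bar R) (G : Z -> \bar R) : Prop :=
  forall u, is_dual u -> J u = ereal_sup [set (u z)%:E - G z | z in [set: Z]].

(* J^star(r) for r in Z, seen in X^star = Z^star* via the canonical embedding *)
Definition conj_at {R : realType} {Z : normedModType R}
  (J : (Z -> R) -> \bar R) (r : Z) : \bar R :=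
  ereal_sup [set (u r)%:E - J u | u in @is_dual R Z].

Definition in_subdiff0 {R : realType} {Z : normedModType R}
  (J : (Z -> R) -> \bar R) (p : Z) : Prop :=
  forall u, is_dual u -> J u >= J (fun _ => 0%R) + (u p)%:E.

Definition coercive_on_dual {R : realType} {Y Z : normedModType R}
  (A : (Z -> R) -> Y) (J : (Z -> R) -> \bar R) : Prop :=
  forall M : R, exists r : R, forall u, is_dual u -> (r < dual_norm u)%R ->
    M%:E < (`|A u| ^+ 2 / 2)%:E + J u.

From mathcomp Require Import all_boot all_order all_algebra.
From mathcomp Require Import all_classical all_reals all_analysis.
From mathcomp Require Import lra.
Import Order.TTheory GRing.Theory Num.Theory numFieldNormedType.Exports.
Local Open Scope classical_set_scope.
Local Open Scope ring_scope.

(* For feasible u the source condition gives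
   <(p - B w) / tau, u> <= J u = <p, u>, i.e. (1 - tau) <p, u> <= (A u | w), so on a
   sublevel set of the objective J u is controlled by |A u|, and coercivity bounds
   the dual norm of u.  Feasible sublevel sets are closed in the pointwise
   (weak-star) topology: J = G^* makes J u <= <p, u> an intersection of closed
   half-spaces, p in dJ(0) gives the reverse inequality, and |A u - f|^2 / 2 is the
   supremum over y of the affine functionals u (B y) - (f | y) - |y|^2 / 2.  By
   Tychonoff the bounded ones are compact, so the nested sets
   {objective <= inf + e} share a point, which is a minimizer. *)

Section LinearFunctional.
Context {R : realType} {Z : normedModType R} {u : Z -> R}.
Hypothesis u_lin : forall (a : R) (x y : Z), u (a *: x + y) = a * u x + u y.

Lemma linfun0 : u 0 = 0.
Proof.
have := u_lin 1 0 0; rewrite scaler0 addr0 mul1r => /eqP.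
by rewrite -subr_eq subrr eq_sym => /eqP.
Qed.

Lemma linfunZ a x : u (a *: x) = a * u x.
Proof. by have := u_lin a x 0; rewrite !addr0 linfun0 addr0. Qed.

Lemma linfunB x y : u (x - y) = u x - u y.
Proof. by rewrite addrC -scaleN1r u_lin mulN1r addrC. Qed.

Lemma linfun_bounded_continuous (r : R) :
  (forall z, `|u z| <= r * `|z|) -> continuous u.
Proof.
move=> u_bnd x; apply/cvgrPdist_lt => e e0.
have r1_gt0 : 0 < `|r| + 1 by rewrite ltr_wpDl.
apply/nbhs_normP; exists (e / (`|r| + 1)); first by rewrite /= divr_gt0.
move=> t /= xt_lt; rewrite -linfunB; apply: le_lt_trans (u_bnd _) _.
apply: le_lt_trans (_ : (`|r| + 1) * `|x - t| < e).
  by apply: ler_wpM2r => //; rewrite (le_trans (ler_norm r)) // lerDl.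
by rewrite mulrC -ltr_pdivlMr.
Qed.

Lemma linfun_continuous_has_sup :
  continuous u -> has_sup [set `|u z| | z in [set z : Z | `|z| <= 1]].
Proof.
move=> u_cont; split; first by exists `|u 0|, 0; rewrite //= normr0.
have /cvgrPdist_lt/(_ 1 ltr01)/nbhs_normP[d d_gt0 u_small] := u_cont 0.
exists (2 / d) => _ [z /= z_le1 <-].
have d2_gt0 : 0 < d / 2 by rewrite divr_gt0.
have : `|u ((d / 2) *: z)| < 1.
  rewrite -normrN -sub0r -linfun0; apply: u_small.
  rewrite /ball_ /= sub0r normrN normrZ gtr0_norm //.
  apply: le_lt_trans (ler_wpM2l (ltW d2_gt0) z_le1) _.
  by rewrite mulr1 ltr_pdivrMr // ltr_pMr // ltr1n.
rewrite linfunZ normrM gtr0_norm // => /ltW.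
by rewrite -ler_pdivlMl // invf_div mulr1.
Qed.

End LinearFunctional.

Lemma dual_norm_bound (R : realType) (Z : normedModType R) (u : Z -> R) (r : R) :
  is_dual u -> dual_norm u <= r -> forall z, `|u z| <= r * `|z|.
Proof.
move=> [u_lin u_cont] u_norm z.
have [->|z_neq0] := eqVneq z 0; first by rewrite linfun0 // !normr0 mulr0.
have z_gt0 : 0 < `|z| by rewrite normr_gt0.
have : `|u (`|z|^-1 *: z)| <= r.
  apply: le_trans u_norm; apply: sup_upper_bound.
    exact: linfun_continuous_has_sup.
  by exists (`|z|^-1 *: z); rewrite //= normrZ normfV normr_id mulVf ?gt_eqF.
by rewrite linfunZ // normrM normfV normr_id ler_pdivrMl // mulrC.
Qed.

Section InnerProduct.
Context {R : realType} {Y : normedModType R} {ip : Y -> Y -> R}.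
Hypothesis ip_inner : is_inner_product ip.

Lemma ipBl x y z : ip (x - y) z = ip x z - ip y z.
Proof. by case: ip_inner => ip_lin _; rewrite addrC -scaleN1r ip_lin mulN1r addrC. Qed.

Lemma ipBr x y z : ip z (x - y) = ip z x - ip z y.
Proof. by case: ip_inner => _ [ipC _]; rewrite ipC ipBl (ipC x) (ipC y). Qed.

Lemma ip_le_half_sqr x y : ip x y <= (`|x| ^+ 2 + `|y| ^+ 2) / 2.
Proof.
case: ip_inner => _ [ipC ip_norm].
have : 0 <= ip (x - y) (x - y) by rewrite -ip_norm sqr_ge0.
rewrite ipBl !ipBr -!ip_norm (ipC y x); lra.
Qed.

Lemma half_sqr_norm_leP x c :
  (forall y, ip x y - `|y| ^+ 2 / 2 <= c) <-> `|x| ^+ 2 / 2 <= c.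
Proof.
case: ip_inner => _ [_ ip_norm]; split=> [/(_ x)|x_le y].
  by rewrite -ip_norm; lra.
by have := ip_le_half_sqr x y; lra.
Qed.

End InnerProduct.

Lemma closed_sublevel {R : realType} {T : topologicalType} (h : T -> R) (c : R) :
  continuous h -> closed [set x | h x <= c].
Proof. by move=> /continuous_closedP/(_ _ (@closed_le _ c)). Qed.

Lemma closed_eq_continuous {R : realType} {T : topologicalType} (h k : T -> R) :
  continuous h -> continuous k -> closed [set x | h x = k x].
Proof.
move=> h_cont k_cont.
have -> : [set x | h x = k x] = (h \- k) @^-1` [set 0].
  by apply/seteqP; split=> x /= => [->|/eqP]; rewrite ?subrr // subr_eq0 => /eqP.
apply: (continuous_closedP (h \- k)).1 _ _ (@closed_eq _ 0).
by move=> x; exact: (continuousB (h_cont x) (k_cont x)).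
Qed.

Lemma closed_EFin_sublevel {R : realType} {T : topologicalType} (h : T -> R)
    (c : \bar R) :
  continuous h -> closed [set x | ((h x)%:E <= c)%E].
Proof.
move=> h_cont; case: c => [c | |].
- have -> : [set x | ((h x)%:E <= c%:E)%E] = [set x | h x <= c].
    by apply/seteqP; split=> x /=; rewrite lee_fin.
  exact: closed_sublevel.
- have -> : [set x | ((h x)%:E <= +oo)%E] = setT.
    by apply/seteqP; split=> x //= _; rewrite leey.
  exact: closedT.
- have -> : [set x | ((h x)%:E <= -oo)%E] = set0.
    by apply/seteqP; split=> x //=; rewrite leeNy_eq.
  exact: closed0.
Qed.

Lemma closed_forall {T : topologicalType} {I : Type} (P : I -> set T) :
  (forall i, closed (P i)) -> closed [set x | forall i, P i x].
Proof.
move=> P_closed; have -> : [set x | forall i, P i x] = \bigcap_(i in setT) P i.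
  by apply/seteqP; split=> x /= Px i //; exact: Px.
exact: closed_bigI.
Qed.

Lemma compact_nested_closed {R : realType} {T : topologicalType}
    {K : set T} {C : R -> set T} :
  compact K -> (forall e, 0 < e -> closed (C e)) ->
  (forall e, 0 < e -> K `&` C e !=set0) ->
  (forall e1 e2, e1 <= e2 -> C e1 `<=` C e2) ->
  exists2 u, K u & forall e, 0 < e -> C e u.
Proof.
move=> K_compact C_closed KC_neq0 C_mono.
pose F := filter_from [set e : R | 0 < e] (fun e => K `&` C e).
have F_proper : ProperFilter F.
  apply: filter_from_proper; last exact: KC_neq0.
  apply: filter_from_filter; first by exists 1 => /=.
  move=> e1 e2 /= e1_gt0 e2_gt0; exists (Num.min e1 e2); first by rewrite /= lt_min e1_gt0.
  move=> x [Kx Cx]; split; split=> //; apply: C_mono Cx; by rewrite ge_min lexx ?orbT.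
have [|u [Ku u_cluster]] := K_compact F F_proper; first by exists 1 => //= x [].
exists u => // e e_gt0; apply: C_closed => //.
have : closure (K `&` C e) u.
  by move=> B uB; apply: u_cluster uB; exists e.
by apply: closure_subset => x [].
Qed.

Section PointwiseTopology.
Context {R : realType} {Z : normedModType R}.
Local Notation PT := {ptws Z -> R}.

Lemma ptws_eval_continuous (z : Z) : continuous (fun u : PT => u z).
Proof. exact: (@proj_continuous Z (fun _ => R) z). Qed.

Lemma ptws_compact_bounded (r : R) :
  compact [set u : PT | forall z, `|u z| <= r * `|z|].
Proof.
have -> : [set u : PT | forall z, `|u z| <= r * `|z|] =
          [set u : PT | forall z, `[- (r * `|z|), r * `|z|]%classic (u z)].
  by apply/seteqP; split=> u /= u_bnd z; have := u_bnd z; rewrite in_itv /= ler_norml.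
exact: (tychonoff (fun z => @segment_compact R _ _)).
Qed.

Lemma ptws_closed_linear :
  closed [set u : PT | forall (a : R) (x y : Z), u (a *: x + y) = a * u x + u y].
Proof.
apply: closed_forall => a; apply: closed_forall => x; apply: closed_forall => y.
have comb_cont : continuous (fun u : PT => a * u x + u y).
  move=> u; have a_cont : continuous (fun _ : PT => a) by exact: cst_continuous.
  exact: (continuousD (continuousM (a_cont u) (ptws_eval_continuous x u))
                      (ptws_eval_continuous y u)).
exact: (closed_eq_continuous _ _ (ptws_eval_continuous (a *: x + y)) comb_cont).
Qed.

Lemma ptws_closed_conj_le (G : Z -> \bar R) (p : Z) : (forall z, G z != -oo%E) ->
  closed [set u : PT | forall z, ((u z)%:E - G z <= (u p)%:E)%E].
Proof.
move=> G_ninfty.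
have conj_leE (u : PT) z :
    ((u z)%:E - G z <= (u p)%:E)%E <-> ((u z - u p)%:E <= G z)%E.
  move: (G_ninfty z); case: (G z) => [g _ | _ | //].
    by rewrite -EFinB !lee_fin; split=> ?; lra.
  by rewrite leey addeNy leNye.
have -> : [set u : PT | forall z, ((u z)%:E - G z <= (u p)%:E)%E] =
          [set u : PT | forall z, ((u z - u p)%:E <= G z)%E].
  by apply/seteqP; split=> u /= u_le z; apply/conj_leE.
apply: closed_forall => z; apply: closed_EFin_sublevel => u.
exact: (continuousB (ptws_eval_continuous z u) (ptws_eval_continuous p u)).
Qed.

Lemma ptws_closed_affine_le (I : Type) (z : I -> Z) (g : I -> R) (c : R) :
  closed [set u : PT | forall i, u (z i) - g i <= c].
Proof.
apply: closed_forall => i; apply: closed_sublevel => u.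
by apply: continuousB; [exact: ptws_eval_continuous | exact: cst_continuous].
Qed.

End PointwiseTopology.

Lemma subeEFin_eq0 {R : realType} (x : \bar R) (a : R) :
  x != -oo%E -> (x - a%:E = 0)%E <-> x = a%:E.
Proof.
case: x => [x| |] //= _; split; last by case=> ->; rewrite subee.
by move=> /eqP; rewrite -EFinB eqe subr_eq0 => /eqP ->.
Qed.

Lemma is_dual0 (R : realType) (Z : normedModType R) : is_dual (fun _ : Z => 0 : R).
Proof. by split; [move=> a x y; rewrite mulr0 addr0 | exact: cst_continuous]. Qed.

Lemma abs_one_homogeneous0 (R : realType) (Z : normedModType R)
    (J : (Z -> R) -> \bar R) :
  abs_one_homogeneous J -> J (fun _ => 0) = 0%E.
Proof.
move=> J_hom; have := J_hom 0 _ (@is_dual0 R Z).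
by under eq_fun do rewrite mulr0; rewrite normr0 mul0e.
Qed.

Section ConstrainedMinimizer.
Context {R : realType} {Y Z : normedModType R} {ip : Y -> Y -> R} {B : Y -> Z}.
Context {A : (Z -> R) -> Y} {J : (Z -> R) -> \bar R} {G : Z -> \bar R}.
Variable f : Y.
Context {w : Y} {p : Z} {tau : R}.
Hypothesis ip_inner : is_inner_product ip.
Hypothesis A_adjoint : forall u, is_dual u -> forall y, ip (A u) y = u (B y).
Hypothesis G_ninfty : forall z, G z != -oo%E.
Hypothesis J_conj : is_conjugate_of J G.
Hypothesis J_hom : abs_one_homogeneous J.
Hypothesis J_coercive : coercive_on_dual A J.
Hypothesis p_subdiff : in_subdiff0 J p.
Hypotheses (tau_gt0 : 0 < tau) (tau_lt1 : tau < 1).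
Hypothesis source_condition : conj_at J (tau^-1 *: (p - B w)) = 0%E.

Let feasible (v : Z -> R) := is_dual v /\ J v = (v p)%:E.
Let objective (v : Z -> R) := `|A v - f| ^+ 2 / 2.

Lemma feasible_source_bound v : feasible v -> (1 - tau) * v p <= ip (A v) w.
Proof.
move=> [v_dual Jv].
have : ((v (tau^-1 *: (p - B w)))%:E - J v <= 0)%E.
  by rewrite -source_condition; apply: ereal_sup_ubound; exists v.
have [v_lin _] := v_dual.
rewrite Jv -EFinB lee_fin (linfunZ v_lin) (linfunB v_lin) -A_adjoint //.
rewrite -(ler_pM2l tau_gt0) mulr0 mulrBr mulrA mulfV ?gt_eqF // mul1r; lra.
Qed.

Lemma objective_sublevel_bounded c :
  exists r, forall v, feasible v -> objective v <= c -> forall z, `|v z| <= r * `|z|.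
Proof.
pose K := c + 1 + `|f|.
pose M := K ^+ 2 / 2 + (K ^+ 2 + `|w| ^+ 2) / (2 * (1 - tau)).
have [r r_coercive] := J_coercive M; exists r => v v_feas v_obj.
have v_src := feasible_source_bound v v_feas; case: v_feas => v_dual Jv.
apply: dual_norm_bound => //; rewrite leNgt; apply/negP => /(r_coercive v v_dual).
rewrite Jv -EFinD lte_fin.
have Av_le : `|A v| <= K.
  have := ler_normD (A v - f) f; rewrite subrK.
  have := sqr_ge0 (`|A v - f| - 1); rewrite /objective in v_obj; rewrite /K; nra.
have vp_le : v p <= (K ^+ 2 + `|w| ^+ 2) / (2 * (1 - tau)).
  rewrite ler_pdivlMr; last by rewrite mulr_gt0 ?subr_gt0.
  have := ip_le_half_sqr ip_inner (A v) w; have := normr_ge0 (A v); nra.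
rewrite /M; have := normr_ge0 (A v); nra.
Qed.

Lemma objective_leP v c : is_dual v ->
  (forall y, v (B y) - (ip f y + `|y| ^+ 2 / 2) <= c) <-> objective v <= c.
Proof.
move=> v_dual; rewrite -(half_sqr_norm_leP ip_inner).
have affineE y : v (B y) - (ip f y + `|y| ^+ 2 / 2) = ip (A v - f) y - `|y| ^+ 2 / 2.
  by rewrite (ipBl ip_inner) A_adjoint //; lra.
by split=> v_le y; [rewrite -affineE | rewrite affineE].
Qed.

Lemma feasible_conj_le v : feasible v -> forall z, ((v z)%:E - G z <= (v p)%:E)%E.
Proof.
by move=> [v_dual <-] z; rewrite J_conj //; apply: ereal_sup_ubound; exists z.
Qed.

Lemma conj_le_feasible v : is_dual v ->
  (forall z, ((v z)%:E - G z <= (v p)%:E)%E) -> feasible v.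
Proof.
move=> v_dual v_le; split=> //; apply/le_anti/andP; split.
  by rewrite J_conj //; apply: ge_ereal_sup => _ [z _ <-]; exact: v_le.
by have := p_subdiff v v_dual; rewrite abs_one_homogeneous0 // add0e.
Qed.

Let m := inf [set objective v | v in feasible].

Lemma objective_has_inf : has_inf [set objective v | v in feasible].
Proof.
split; last by exists 0 => _ [v _ <-]; rewrite /objective divr_ge0 ?sqr_ge0.
exists (objective (fun _ => 0)), (fun _ => 0) => //.
by split; [exact: is_dual0 | rewrite abs_one_homogeneous0].
Qed.

Lemma feasible_near_inf e : 0 < e -> exists2 v, feasible v & objective v <= m + e.
Proof.
move=> e_gt0; have [_ [v v_feas <-] v_lt] := inf_adherent e_gt0 objective_has_inf.
by exists v => //; exact: ltW.
Qed.

Lemma feasible_minimizer_exists :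
  exists2 u, feasible u & forall v, feasible v -> objective u <= objective v.
Proof.
have [r r_bnd] := objective_sublevel_bounded (m + 1).
pose C e := [set u : {ptws Z -> R} | forall a x y, u (a *: x + y) = a * u x + u y]
  `&` [set u | forall z, ((u z)%:E - G z <= (u p)%:E)%E]
  `&` [set u | forall y, u (B y) - (ip f y + `|y| ^+ 2 / 2) <= m + e].
have C_closed e : 0 < e -> closed (C e).
  move=> _; apply: closedI; last exact: ptws_closed_affine_le.
  by apply: closedI; [exact: ptws_closed_linear | exact: ptws_closed_conj_le].
have C_mono e1 e2 : e1 <= e2 -> C e1 `<=` C e2.
  move=> e12 u [u_lc u_le]; split=> // y; apply: le_trans (u_le y) _.
  by rewrite lerD2l.
have KC_neq0 e : 0 < e -> [set u | forall z, `|u z| <= r * `|z|] `&` C e !=set0.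
  move=> e_gt0; have [|v v_feas v_obj] := feasible_near_inf (Num.min e 1).
    by rewrite lt_min e_gt0 ltr01.
  have [v_dual _] := v_feas.
  exists v; split.
    apply: (r_bnd v v_feas); apply: le_trans v_obj _.
    by rewrite lerD2l ge_min lexx orbT.
  split; first by split; [exact: v_dual.1 | exact: feasible_conj_le].
  apply/(objective_leP v _ v_dual); apply: le_trans v_obj _.
  by rewrite lerD2l ge_min lexx.
have [u u_bnd u_C] := compact_nested_closed (ptws_compact_bounded r) C_closed KC_neq0 C_mono.
have [[u_lin u_le] _] := u_C 1 ltr01.
have u_dual : is_dual u by split=> //; exact: linfun_bounded_continuous u_bnd.
have u_feas := conj_le_feasible u u_dual u_le.
exists u => // v v_feas.
apply: le_trans (_ : m <= _); last by apply: (ge_inf objective_has_inf.2); exists v.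
apply/ler_addgt0Pr => e e_gt0; apply/(objective_leP u _ u_dual).
by have [] := u_C e e_gt0.
Qed.

End ConstrainedMinimizer.

Theorem theorem2 (R : realType) (Y Z : completeNormedModType R)
  (ip : Y -> Y -> R) (B : Y -> Z) (A : (Z -> R) -> Y)
  (J : (Z -> R) -> \bar R) (f : Y) (p : Z) :
  is_inner_product ip ->
  wstar_metrizable_on_bounded Z ->
  (forall (a : R) (y1 y2 : Y), B (a *: y1 + y2) = a *: B y1 + B y2) ->
  continuous B ->
  (forall u, is_dual u -> forall y, ip (A u) y = u (B y)) ->
  (forall u, is_dual u -> J u != -oo%E) ->
  convex_on_dual J ->
  abs_one_homogeneous J ->
  (exists G : Z -> \bar R, proper_fun G /\ is_conjugate_of J G) ->
  coercive_on_dual A J ->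
  in_subdiff0 J p ->
  (exists (w : Y) (tau : R), 0 < tau < 1 /\ conj_at J (tau^-1 *: (p - B w)) = 0%E) ->
  exists u : Z -> R, is_dual u /\ (J u - (u p)%:E = 0)%E /\
    forall v : Z -> R, is_dual v -> (J v - (v p)%:E = 0)%E ->
      `|A u - f| ^+ 2 / 2 <= `|A v - f| ^+ 2 / 2.
Proof.
move=> ip_inner _ _ _ A_adjoint J_ninfty _ J_hom [G [[G_ninfty _] J_conj]]
  J_coercive p_subdiff [w [tau [/andP[tau_gt0 tau_lt1] source]]].
have [u [u_dual Ju] u_min] := feasible_minimizer_exists f ip_inner A_adjoint
  G_ninfty J_conj J_hom J_coercive p_subdiff tau_gt0 tau_lt1 source.
exists u; split=> //; split; first exact/(subeEFin_eq0 _ _ (J_ninfty u u_dual)).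
move=> v v_dual /(subeEFin_eq0 _ _ (J_ninfty v v_dual)) Jv.
exact: u_min.
Qed.
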